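(* If $L$ is a $k$-flat of $I(\mathfrak{gl}_n,V\oplus\bigwedge^2)$, then $\{(a,b)\in\mathbb{E}^\ast_n:\vec v(a,b)\in L\}$ is a $k$-ensemble.
   Context: Identify the diagonal Cartan subalgebra of $\mathfrak{gl}_n$ with $\mathbb{R}^n$ with coordinates $x_1,\dots,x_n$, and let $W=\{x_1\ge\cdots\ge x_n\}$. For $1\le i\le j\le n$ let $\lambda_{i,j}^\perp$ be the hyperplane $x_i+x_j=0$ (for $i=j$: $x_i=0$); $I(\mathfrak{gl}_n,V\oplus\bigwedge^2)$ is the arrangement of these hyperplanes restricted to $W$. A flat is a set $W\cap\bigcap_{(i,j)\in T}\lambda_{i,j}^\perp$ for a (possibly empty) set $T$ of pairs $i\le j$; a $k$-flat is one whose linear span has dimension $k$. Let $\vec v(a,b)\in\mathbb{R}^n$ have $a$ ones, then $n-a-b$ zeros, then $b$ minus-ones. Order $\mathbb{N}^2$ by $(a,b)\le(c,d)\iff a\le c, b\le d$, with level $\ell(a,b)=a+b$. Let $\mathbb{E}_n=\{P\in\mathbb{N}^2:\ell(P)\le n\}$, $\mathbb{E}^\ast_n=\mathbb{E}_n\setminus\{(0,0)\}$, $\widehat{\mathbb{E}}_n=\mathbb{E}_n\sqcup\{\infty\}$ with $\infty$ the maximum; intervals $[A,B]$ are taken in $\widehat{\mathbb{E}}_n$. An ensemble is a set $\left(\bigcup_{0\le i\le m}[A_i,B_i]\right)\cap\mathbb{E}^\ast_n$ with $A_i,B_i\in\widehat{\mathbb{E}}_n$ such that (1) $A_0=(0,0)$;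 (2) $A_i\le B_i$; (3) $B_i+(1,1)\le A_{i+1}$ for $0\le i\le m-1$; (4) $\ell(B_m)<n$ or $B_m=\infty$. It is a $k$-ensemble if its elements have exactly $k$ distinct levels. *)

From HB Require Import structures.
From mathcomp Require Import all_boot all_order all_algebra.
From mathcomp Require Import reals.
Set Implicit Arguments. Unset Strict Implicit. Unset Printing Implicit Defensive.
Import Order.TTheory GRing.Theory Num.Theory.
Local Open Scope ring_scope.

(* Coordinates x_1..x_n of the paper are the entries x 0 i, i : 'I_n
   (0-based indices). *)

Definition inW (R : realType) (n : nat) (x : 'rV[R]_n) : Prop :=
  forall i j : 'I_n, (i <= j)%N -> x 0 j <= x 0 i.

Definition on_hyp (R : realType) (n : nat) (i j : 'I_n) (x : 'rV[R]_n) : Prop :=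
  if i == j then x 0 i = 0 else x 0 i + x 0 j = 0.

Definition flat_of (R : realType) (n : nat) (T : {set 'I_n * 'I_n})
  (x : 'rV[R]_n) : Prop :=
  inW x /\ forall p, p \in T -> on_hyp p.1 p.2 x.

Definition is_flat (R : realType) (n : nat) (L : 'rV[R]_n -> Prop) : Prop :=
  exists T : {set 'I_n * 'I_n},
    (forall p, p \in T -> (p.1 <= p.2)%N) /\ (forall x, L x <-> flat_of T x).

Definition span_dim (R : realType) (n : nat) (L : 'rV[R]_n -> Prop) (k : nat)
  : Prop :=
  exists U : {vspace 'rV[R]_n},
    [/\ forall x, L x -> x \in U,
        forall V : {vspace 'rV[R]_n}, (forall x, L x -> x \in V) -> (U <= V)%VS
      & \dim U = k].

Definition is_kflat (R : realType) (n k : nat) (L : 'rV[R]_n -> Prop) : Prop :=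
  is_flat L /\ span_dim L k.

Definition vecv (R : realType) (n a b : nat) : 'rV[R]_n :=
  \row_(i < n) (if (i < a)%N then 1 else if (n - b <= i)%N then -1 else 0).

Definition level (P : nat * nat) : nat := (P.1 + P.2)%N.
Definition inE (n : nat) (P : nat * nat) : bool := (level P <= n)%N.
Definition inEstar (n : nat) (P : nat * nat) : bool := inE n P && (P != (0, 0)%N).

(* hat E_n = E_n + {oo}; [None] is oo, the maximum. *)
Definition inEhat (n : nat) (X : option (nat * nat)) : bool :=
  if X is Some P then inE n P else true.

Definition hle (X Y : option (nat * nat)) : bool :=
  match X, Y with
  | _, None => true
  | None, Some _ => false
  | Some P, Some Q => (P.1 <= Q.1)%N && (P.2 <= Q.2)%N
  end.

Definition shift11 (X : option (nat * nat)) : option (nat * nat) :=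
  if X is Some P then Some (P.1.+1, P.2.+1) else None.

(* S is an ensemble: S = (U_{0<=i<=m} [A_i, B_i]) /\ E_n^*, with (1)-(4). *)
Definition is_ensemble (n : nat) (S : nat * nat -> Prop) : Prop :=
  exists (m : nat) (A B : nat -> option (nat * nat)),
    (forall i, (i <= m)%N -> inEhat n (A i) && inEhat n (B i)) /\
    [/\ A 0%N = Some (0, 0)%N,
        forall i, (i <= m)%N -> hle (A i) (B i),
        forall i, (i < m)%N -> hle (shift11 (B i)) (A i.+1),
        (if B m is Some P then (level P < n)%N else true)
      & forall P, S P <->
          (inEstar n P /\
           exists2 i, (i <= m)%N & hle (A i) (Some P) && hle (Some P) (B i))].

Definition num_levels (S : nat * nat -> Prop) (k : nat) : Prop :=
  exists s : seq nat,
    [/\ uniq s, size s = k & forall l, l \in s <-> exists2 P, S P & level P = l].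

Definition is_k_ensemble (n k : nat) (S : nat * nat -> Prop) : Prop :=
  is_ensemble n S /\ num_levels S k.

(* The hyperplane x_i + x_j = 0 (i <= j) is encoded by the point Q = (i, n-1-j):
   v(P) lies on it iff P <= Q or Q + (1,1) <= P.  Cutting the square
   [(0,0), (n,n)] successively along these conditions leaves a list of boxes,
   each strictly above and to the right of the previous one, which describe
   {P : v(P) in L} as an ensemble.  A point x of the flat is a positive
   combination of sign vectors v(P) lying in the flat: subtract t sg(x), where
   t is the least nonzero |x_i|.  So L spans the same space as its vectors v(P).
   In a box these are spanned by the v(P) on a staircase going right, then up,
   with one point per level; the staircases of the successive boxes form one
   chain for the product order, whose vectors are independent by
   triangularity.  Hence dim span L is the number of levels. *)

From HB Require Import structures.
From mathcomp Require Import all_boot all_order all_algebra zify lra.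
From mathcomp Require Import reals.
Set Implicit Arguments. Unset Strict Implicit. Unset Printing Implicit Defensive.

Local Notation point := (nat * nat)%type.
Local Notation box := (point * point)%type.

Definition ple (P Q : point) : bool := (P.1 <= Q.1) && (P.2 <= Q.2).
Definition plt (P Q : point) : bool := ple P Q && (level P < level Q).
Definition succ11 (P : point) : point := (P.1.+1, P.2.+1).

Definition in_box (P : point) (X : box) : bool := ple X.1 P && ple P X.2.
Definition box_lt (X Y : box) : bool := ple (succ11 X.2) Y.1.
Definition box_ok (n : nat) (X : box) : bool :=
  ple X.1 X.2 && ((X.2 == (n, n)) || (level X.2 < n)).

Lemma pairwise_flatten_map (S T : eqType) (rS : rel S) (rT : rel T)
    (f : S -> seq T) (s : seq S) :
  pairwise rS s -> {in s, forall x, pairwise rT (f x)} ->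
  {in s &, forall x y, rS x y -> {in f x & f y, forall x' y', rT x' y'}} ->
  pairwise rT (flatten (map f s)).
Proof.
elim: s => //= x s IH /andP[rSx rSs] rTf rTxy.
have rTs : pairwise rT (flatten (map f s)).
  apply: IH => //; first by move=> y ys; apply: rTf; rewrite in_cons ys orbT.
  by move=> y z ys zs; apply: rTxy; rewrite in_cons ?ys ?zs orbT.
rewrite pairwise_cat (rTf x) ?mem_head // rTs !andbT.
apply/allrelP => x' y' x'x /flatten_mapP[y ys y'y].
by apply: (rTxy x y) (allP rSx y ys) _ _ x'x y'y; rewrite in_cons ?eqxx ?ys ?orbT.
Qed.

Lemma has_flatten_map (S T : Type) (p : pred T) (f : S -> seq T) (s : seq S) :
  has p (flatten (map f s)) = has (fun x => has p (f x)) s.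
Proof. by elim: s => //= x s IH; rewrite has_cat IH. Qed.

Definition hyp_point (n : nat) (p : 'I_n * 'I_n) : point :=
  (nat_of_ord p.1, n.-1 - p.2).

Definition compat (Q P : point) : bool := (P.1 <= Q.1) == (P.2 <= Q.2).

Lemma compatE Q P : compat Q P = ple P Q || ple (succ11 Q) P.
Proof.
by case: Q P => p q [x y]; rewrite /compat /ple /=; case: (leqP x p); case: (leqP y q).
Qed.

Lemma hyp_point_lt n (T : {set 'I_n * 'I_n}) :
  (forall p, p \in T -> p.1 <= p.2) ->
  all (fun Q => level Q < n) [seq hyp_point p | p <- enum T].
Proof.
move=> Tle; apply/allP => _ /mapP[p pT ->]; rewrite mem_enum in pT.
by have := Tle p pT; have := ltn_ord p.2; rewrite /hyp_point /level /=; lia.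
Qed.

Definition box_split (Q : point) (X : box) : seq box :=
  let A' := (maxn X.1.1 Q.1.+1, maxn X.1.2 Q.2.+1) in
  (if ple X.1 Q then [:: (X.1, (minn X.2.1 Q.1, minn X.2.2 Q.2))] else [::]) ++
  (if ple A' X.2 then [:: (A', X.2)] else [::]).

Lemma has_box_split P Q X :
  has (in_box P) (box_split Q X) = in_box P X && compat Q P.
Proof.
rewrite compatE /box_split /in_box /ple /succ11.
case: X => [[a1 b1] [a2 b2]]; case: Q => p q; case: P => x y /=.
by case: ifPn => g1; case: ifPn => g2; rewrite /= ?orbF ?andbF ?andbT;
  apply/idP/idP => H; lia.
Qed.

Lemma box_split_sub Q X Y : Y \in box_split Q X -> ple X.1 Y.1 && ple Y.2 X.2.
Proof.
case: X Q => [[a1 b1] [a2 b2]] [p q]; rewrite /box_split /ple mem_cat /=.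
do 2!case: ifPn => ?; rewrite ?in_cons ?in_nil ?orbF //=;
  by try case/orP; move/eqP=> -> /=; lia.
Qed.

Definition boxes (n : nat) (Qs : seq point) : seq box :=
  foldr (fun Q xs => flatten (map (box_split Q) xs)) [:: ((0, 0), (n, n))] Qs.

Lemma has_boxes n Qs P :
  ple P (n, n) -> has (in_box P) (boxes n Qs) = all (compat^~ P) Qs.
Proof.
move=> Pn; elim: Qs => [|Q Qs IH] /=; first by rewrite /in_box Pn andbT orbF.
rewrite has_flatten_map (eq_has (fun X => has_box_split P Q X)) -IH.
case: (compat Q P); first by under eq_has do rewrite andbT.
by apply/negbTE/hasPn => X _; rewrite andbF.
Qed.

Lemma boxes_head n Qs : exists B rs, boxes n Qs = ((0, 0), B) :: rs.
Proof.
elim: Qs => [|Q Qs [B [rs IH]]] /=; first by exists (n, n), [::].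
by rewrite IH /= /box_split /ple /=; do 2!eexists.
Qed.

Lemma box_split_ok n Q X :
  level Q < n -> box_ok n X -> all (box_ok n) (box_split Q X).
Proof.
case: X Q => [[a1 b1] [a2 b2]] [p q]; rewrite /box_ok /box_split /ple /level /=.
by do 2!case: ifPn => /=; rewrite ?andbT //; lia.
Qed.

Lemma boxes_ok n Qs : all (fun Q => level Q < n) Qs -> all (box_ok n) (boxes n Qs).
Proof.
elim: Qs => [|Q Qs IH] /=; first by rewrite andbT /box_ok /ple eqxx.
case/andP=> Qn /IH /allP ok; apply/allP => Y /flatten_mapP[X Xin YX].
exact: allP (box_split_ok Qn (ok X Xin)) Y YX.
Qed.

Lemma box_split_sorted Q X : pairwise box_lt (box_split Q X).
Proof.
case: X Q => [[a1 b1] [a2 b2]] [p q]; rewrite /box_lt /box_split /ple /succ11 /=.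
by do 2!case: ifPn => /=; rewrite ?andbT //; lia.
Qed.

Lemma boxes_sorted n Qs : pairwise box_lt (boxes n Qs).
Proof.
elim: Qs => [|Q Qs IH] //=; apply: pairwise_flatten_map IH _ _.
  by move=> X _; apply: box_split_sorted.
move=> X Y _ _ + X' Y' /box_split_sub + /box_split_sub.
by rewrite /box_lt /ple /succ11 /=; lia.
Qed.

Lemma box_ok_end n X : box_ok n X -> ple X.1 X.2 && ple X.2 (n, n).
Proof.
case: X => P [x y]; rewrite /box_ok /ple /level /= => /andP[-> /orP[/eqP[-> ->]|]].
  by rewrite !leqnn.
by lia.
Qed.

Section BoxEnsemble.
Variables (n : nat) (rs : seq box).
Hypotheses (rs_head : exists B rs', rs = ((0, 0), B) :: rs')
  (rs_ok : all (box_ok n) rs) (rs_sorted : pairwise box_lt rs)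
  (rs_inE : all (fun X => inE n X.1) rs).

Let d : box := ((0, 0), (0, 0)).
Let m := (size rs).-1.
Let A i := Some (nth d rs i).1.
(* An upper corner [(n, n)] is recorded as [oo]; by [end_nth_neq] this happens
   at most for the last box. *)
Let B i := let Y := (nth d rs i).2 in if Y == (n, n) then None else Some Y.

Lemma size_boxes_gt0 : 0 < size rs.
Proof. by case: rs_head => ? [? ->]. Qed.

Lemma box_ok_nth i : i < size rs -> box_ok n (nth d rs i).
Proof. exact: all_nthP. Qed.

Lemma box_lt_nth i j : i < j < size rs -> box_lt (nth d rs i) (nth d rs j).
Proof.
by case/andP=> ij js; apply: (pairwiseP d rs_sorted); rewrite ?unfold_in /=; lia.
Qed.

Lemma hle_upper i P : i < size rs -> inE n P ->
  hle (Some P) (B i) = ple P (nth d rs i).2.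
Proof.
rewrite /B /=; case: eqP => [-> _|//]; rewrite /inE /level /ple /= => Pn.
by apply/esym/andP; lia.
Qed.

Lemma end_nth_neq i : i < m -> (nth d rs i).2 != (n, n).
Proof.
move=> im; have ism : i < i.+1 < size rs by rewrite /m in im; lia.
have := box_lt_nth ism; have /box_ok_end := box_ok_nth (proj2 (andP ism)).
rewrite /box_lt /ple /succ11 /= => /andP[/andP[? ?] /andP[? ?]] /andP[? ?].
by apply/eqP => /(congr1 fst) /=; lia.
Qed.

Lemma is_ensemble_boxes_inE :
  is_ensemble n (fun P => inEstar n P /\ has (in_box P) rs).
Proof.
have ms : m < size rs by rewrite /m prednK // size_boxes_gt0.
exists m, A, B; split; [|split].
- move=> i im; have /andP[_ ok] := box_ok_nth (leq_ltn_trans im ms).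
  rewrite /A /B /= (all_nthP d rs_inE) ?(leq_ltn_trans im ms) //.
  by case: eqP ok => //= _; rewrite /inE; lia.
- by rewrite /A; case: rs_head => ? [? ->].
- move=> i im; rewrite /A /B; case: eqP => //= _.
  by case/andP: (box_ok_nth (leq_ltn_trans im ms)).
- move=> i im; rewrite /B (negbTE (end_nth_neq im)) /A /=.
  by apply: box_lt_nth; rewrite /m in im *; lia.
- rewrite /B; case: eqP => //= /eqP endn.
  by case/andP: (box_ok_nth ms) => _; rewrite (negbTE endn).
move=> P; split=> -[PE PB]; split=> //; have /andP[Pn _] := PE.
  case/(has_nthP d): PB => i ir /andP[AP PB'].
  exists i; first by rewrite /m; lia.
  by rewrite hle_upper // /A /=; apply/andP; split.
case: PB => i im /andP[AP PB']; apply/(has_nthP d); exists i; first lia.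
by rewrite /in_box -hle_upper //; [apply/andP | lia].
Qed.

End BoxEnsemble.

Definition stair (X : box) (l : nat) : point :=
  let a := minn X.2.1 (l - X.1.2) in (a, l - a).

Definition staircase (n : nat) (X : box) : seq point :=
  [seq stair X l | l <- iota (level X.1) ((minn (level X.2) n).+1 - level X.1)].

Lemma level_stair X l : level (stair X l) = l.
Proof. by rewrite /level /=; lia. Qed.

Lemma stair_mono X l l' : l <= l' -> ple (stair X l) (stair X l').
Proof. by rewrite /ple /=; lia. Qed.

Lemma in_box_stair X l :
  ple X.1 X.2 -> level X.1 <= l <= level X.2 -> in_box (stair X l) X.
Proof. by rewrite /in_box /ple /level /=; lia. Qed.

Lemma staircaseP n X Z :
  reflect (exists2 l, level X.1 <= l <= minn (level X.2) n & Z = stair X l)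
          (Z \in staircase n X).
Proof.
apply: (iffP mapP) => -[l]; last by exists l => //; rewrite mem_iota; lia.
by rewrite mem_iota => ??; exists l => //; lia.
Qed.

Lemma mem_stair n X P :
  in_box P X -> level P <= n -> stair X (level P) \in staircase n X.
Proof.
move=> PX Pn; apply/staircaseP; exists (level P) => //.
by move: PX Pn; rewrite /in_box /ple /level /=; lia.
Qed.

Lemma staircase_sorted n X : pairwise plt (staircase n X).
Proof.
rewrite pairwise_map; apply: (@sub_pairwise _ ltn).
  by move=> l l' ll'; rewrite /= /plt stair_mono ?level_stair // ltnW.
by rewrite -sorted_pairwise ?iota_ltn_sorted //; apply: ltn_trans.
Qed.

Definition stairs (n : nat) (rs : seq box) : seq point :=
  [seq Z <- flatten (map (staircase n) rs) | Z != (0, 0)].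

Lemma mem_stairs n rs Z :
  Z \in stairs n rs = (Z != (0, 0)) && has (fun X => Z \in staircase n X) rs.
Proof. by rewrite mem_filter; congr (_ && _); apply/flatten_mapP/hasP. Qed.

Lemma stairs_sorted n rs :
  all (box_ok n) rs -> pairwise box_lt rs -> pairwise plt (stairs n rs).
Proof.
move=> /allP ok rs_lt; apply/pairwise_filter/(pairwise_flatten_map rs_lt).
  by move=> X _; apply: staircase_sorted.
move=> X Y /ok/box_ok_end/andP[XX _] /ok/box_ok_end/andP[YY _] XY Z Z'.
move=> /staircaseP[l Xl ->] /staircaseP[l' Yl' ->].
have /andP[_ ZX] : in_box (stair X l) X by apply: in_box_stair => //; lia.
have /andP[YZ' _] : in_box (stair Y l') Y by apply: in_box_stair => //; lia.
move: XY ZX YZ' XX YY; rewrite /plt !level_stair /box_lt /ple /succ11 /level /=.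
by lia.
Qed.

Lemma stairs_spec n rs Z :
  all (box_ok n) rs -> Z \in stairs n rs -> inEstar n Z /\ has (in_box Z) rs.
Proof.
move=> /allP ok; rewrite mem_stairs => /andP[Z0 /hasP[X Xrs /staircaseP[l lX ZX]]].
have /andP[X12 _] := box_ok_end (ok X Xrs).
split; first by rewrite /inEstar /inE Z0 ZX level_stair andbT; lia.
by apply/hasP; exists X; rewrite // ZX in_box_stair //; lia.
Qed.

Lemma stairs_level n rs P : inEstar n P -> has (in_box P) rs ->
  exists2 Z, Z \in stairs n rs & level Z = level P.
Proof.
case/andP=> Pn P0 /hasP[X Xrs PX]; exists (stair X (level P)); last exact: level_stair.
rewrite mem_stairs; apply/andP; split.
  apply: contra P0 => /eqP/(congr1 level); rewrite level_stair.
  by case: P {PX Pn} => [[|?] [|?]].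
by apply/hasP; exists X => //; apply: mem_stair.
Qed.

Lemma ensemble_ext n (S S' : point -> Prop) :
  (forall P, S P <-> S' P) -> is_ensemble n S' -> is_ensemble n S.
Proof.
move=> SS' [m [A [B [AB [A0 le_AB lt_BA Bm S'E]]]]].
by exists m, A, B; split=> //; split=> // P; rewrite SS'.
Qed.

Lemma k_ensemble_ext n k (S S' : point -> Prop) :
  (forall P, S P <-> S' P) -> is_k_ensemble n k S' -> is_k_ensemble n k S.
Proof.
move=> SS' [/(ensemble_ext SS') ens [s [s_uniq s_size sE]]]; split=> //.
by exists s; split=> // l; rewrite sE; split=> -[P]; exists P => //; apply/SS'.
Qed.

Lemma is_ensemble_boxes n rs :
  (exists B rs', rs = ((0, 0), B) :: rs') -> all (box_ok n) rs -> pairwise box_lt rs ->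
  is_ensemble n (fun P => inEstar n P /\ has (in_box P) rs).
Proof.
move=> [B [rs' rsE]] ok sorted.
pose rsn := [seq X <- rs | inE n X.1].
apply: (ensemble_ext _ (is_ensemble_boxes_inE (rs := rsn) _ _ _ _)).
- move=> P; split=> -[PE PX]; split=> //; have /andP[Pn _] := PE.
  + case/hasP: PX => X Xrs PX; apply/hasP; exists X => //; rewrite mem_filter Xrs andbT.
    by move: PX Pn; rewrite /in_box /ple /inE /level; lia.
  + by case/hasP: PX => X; rewrite mem_filter => /andP[_ Xrs] PX; apply/hasP; exists X.
- by exists B, [seq X <- rs' | inE n X.1]; rewrite /rsn rsE.
- by apply/allP => X; rewrite mem_filter => /andP[_ /(allP ok)].
- exact: pairwise_filter.
- exact: filter_all.
Qed.

Lemma num_levels_stairs n rs : all (box_ok n) rs -> pairwise box_lt rs ->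
  num_levels (fun P => inEstar n P /\ has (in_box P) rs) (size (stairs n rs)).
Proof.
move=> ok sorted; exists [seq level Z | Z <- stairs n rs]; split.
- apply: (@pairwise_uniq _ ltn); first exact: ltnn.
  rewrite pairwise_map; apply: sub_pairwise (stairs_sorted ok sorted).
  by move=> P Q /andP[].
- exact: size_map.
- move=> l; split=> [/mapP[Z /(stairs_spec ok) ZS ->] | [P [PE PX] <-]].
    by exists Z.
  by have [Z ZS <-] := stairs_level PE PX; apply: map_f.
Qed.

Lemma is_k_ensemble_boxes n rs :
  (exists B rs', rs = ((0, 0), B) :: rs') -> all (box_ok n) rs -> pairwise box_lt rs ->
  is_k_ensemble n (size (stairs n rs)) (fun P => inEstar n P /\ has (in_box P) rs).
Proof. by move=> *; split; [apply: is_ensemble_boxes | apply: num_levels_stairs]. Qed.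

Import GRing.Theory Num.Theory.
Local Open Scope ring_scope.

Section Vecv.
Variables (R : realType) (n : nat).
Local Notation v a b := (vecv R n a b).

Lemma vecvE a b (i : 'I_n) :
  v a b 0 i = if (i < a)%N then 1 else if (n - b <= i)%N then -1 else 0.
Proof. by rewrite mxE. Qed.

Lemma vecv00 : v 0 0 = 0.
Proof. by apply/rowP => i; rewrite !mxE ltn0 subn0 leqNgt ltn_ord. Qed.

Lemma vecv_inW a b : (a + b <= n)%N -> inW (v a b).
Proof.
move=> abn i j ij; rewrite !vecvE.
by repeat case: ifPn => ?; try (exfalso; lia); lra.
Qed.

Ltac vecv_eq := apply/rowP => i; rewrite !mxE; have := ltn_ord i;
  repeat case: ifPn => ?; move=> *; try (exfalso; lia); lra.

(* Both sides equal [- e_(n-b-1)]. *)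
Lemma vecv_stepb_indep a a' b : (a + b < n)%N -> (a' + b < n)%N ->
  v a b.+1 - v a b = v a' b.+1 - v a' b.
Proof. by move=> *; vecv_eq. Qed.

Lemma vecv_stepb_stepa a b b' : (a + b < n)%N -> (b' <= b)%N ->
  v a b.+1 - v a b = v (n - b.+1) b' - v (n - b) b'.
Proof. by move=> *; vecv_eq. Qed.

(* Along the staircase of [X] the steps of [b] not available on its vertical
   leg are rewritten as steps of [a] on its horizontal leg. *)
Lemma span_staircase (V : {vspace 'rV[R]_n}) (X : box) :
  ple X.1 X.2 ->
  (forall l, (level X.1 <= l <= minn (level X.2) n)%N ->
     v (stair X l).1 (stair X l).2 \in V) ->
  forall P, in_box P X -> (level P <= n)%N -> v P.1 P.2 \in V.
Proof.
case: X => [[a1 b1] [a2 b2]]; rewrite /ple /level /= => X12 VX [a b].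
rewrite /in_box /ple /level /= => PX Pn.
have hor x : (a1 <= x <= a2)%N -> (x + b1 <= n)%N -> v x b1 \in V.
  move=> ??; have := VX (x + b1)%N; rewrite /stair /=.
  have -> : minn a2 (x + b1 - b1) = x by lia.
  by rewrite addKn; apply; lia.
have ver y : (b1 <= y <= b2)%N -> (a2 + y <= n)%N -> v a2 y \in V.
  move=> ??; have := VX (a2 + y)%N; rewrite /stair /=.
  have -> : minn a2 (a2 + y - b1) = a2 by lia.
  by rewrite addKn; apply; lia.
elim: b PX Pn => [|b IH] PX Pn.
  have b10 : b1 = 0%N by lia.
  by move: hor; rewrite b10; apply; lia.
have [<-|b1b] := eqVneq b1 b.+1; first by apply: hor; lia.
rewrite -[v a b.+1](subrK (v a b)) memvD ?IH //; try lia.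
have [a2b|a2b] := leqP (a2 + b.+1) n.
  by rewrite (@vecv_stepb_indep _ a2) ?memvB ?ver //; lia.
by rewrite (@vecv_stepb_stepa _ _ b1) ?memvB ?hor //; lia.
Qed.

Lemma memv_span_coord0 (X : seq 'rV[R]_n) (i : 'I_n) (y : 'rV[R]_n) :
  {in X, forall x : 'rV[R]_n, x 0 i = 0} -> y \in <<X>>%VS -> y 0 i = 0.
Proof.
move=> X0 /(@coord_span _ _ _ (in_tuple X)) ->; rewrite summxE big1 // => j _.
by rewrite mxE X0 ?mulr0 // mem_nth.
Qed.

Lemma vecv_coord_sep P P' : inEstar n P -> plt P' P ->
  exists i : 'I_n, v P.1 P.2 0 i != 0 /\ forall Q, ple Q P' -> v Q.1 Q.2 0 i = 0.
Proof.
case: P P' => a b [a' b']; rewrite /inEstar /inE /plt /ple /level /=.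
move=> /andP[abn ab0] /andP[/andP[a'a b'b] lvl].
have [a'lt|aa'] := ltnP a' a.
- have ia : (a.-1 < n)%N by lia.
  exists (Ordinal ia); rewrite vecvE /= ifT ?oner_neq0; last by lia.
  split=> // -[c d] /= /andP[? ?]; rewrite vecvE /=.
  by repeat case: ifPn => ?; try (exfalso; lia).
- have ib : (n - b < n)%N by lia.
  exists (Ordinal ib); rewrite vecvE /= ifF ?ifT ?oppr_eq0 ?oner_eq0; try lia.
  split=> // -[c d] /= /andP[? ?]; rewrite vecvE /=.
  by repeat case: ifPn => ?; try (exfalso; lia).
Qed.

Lemma ple_last (C : seq point) :
  pairwise plt C -> {in C, forall Q, ple Q (last (0, 0) C)}.
Proof.
case/lastP: C => // C P; rewrite pairwise_rcons last_rcons => /andP[/allP CP _] Q.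
rewrite mem_rcons in_cons => /orP[/eqP ->|/CP /andP[] //].
by rewrite /ple !leqnn.
Qed.

Lemma free_vecv_sorted (C : seq point) :
  all (inEstar n) C -> pairwise plt C -> free [seq v P.1 P.2 | P <- C].
Proof.
elim/last_ind: C => [|C P IH]; first by rewrite /free span_nil dimv0.
rewrite all_rcons pairwise_rcons => /andP[PE CE] /andP[CP Csorted].
rewrite map_rcons (perm_free (permEl (perm_rcons _ _))) free_cons IH // andbT.
have last_lt : plt (last (0, 0) C) P.
  case/lastP: C CP {IH CE Csorted} => [_|C Q]; last first.
    by rewrite all_rcons last_rcons => /andP[].
  by case: P PE => [[|a] [|b]]; rewrite /inEstar /plt /ple /level.
have [i [vPi vQi]] := vecv_coord_sep PE last_lt.
apply: contra vPi => /(memv_span_coord0 _)-> //.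
by move=> _ /mapP[Q QC ->]; apply/vQi/ple_last.
Qed.
End Vecv.

Section SignVector.
Variables (R : realType) (n : nat).
Implicit Types (x : 'rV[R]_n) (T : {set 'I_n * 'I_n}).

Lemma down_closed_prefix (P : pred 'I_n) :
  (forall i j : 'I_n, (i <= j)%N -> P j -> P i) ->
  exists2 a, (a <= n)%N & forall i : 'I_n, P i = (i < a)%N.
Proof.
move=> Pdown; have bounded : exists c, [forall i : 'I_n, P i ==> (i < c)%N].
  by exists n; apply/forallP => i; rewrite ltn_ord implybT.
have [a /forallP aP amin] := ex_minnP bounded.
exists a; first by apply: amin; apply/forallP => i; rewrite ltn_ord implybT.
move=> i; apply/idP/idP => [|ia]; first exact: implyP (aP i).
apply/negPn/negP => Pi; suff : (a <= i)%N by lia.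
apply: amin; apply/forallP => j; apply/implyP => Pj; rewrite ltnNge.
by apply: contra Pi => ij; apply: Pdown Pj.
Qed.

Lemma up_closed_suffix (P : pred 'I_n) :
  (forall i j : 'I_n, (i <= j)%N -> P i -> P j) ->
  exists2 b, (b <= n)%N & forall i : 'I_n, P i = (n - b <= i)%N.
Proof.
move=> Pup; have [|b bn Pb] := @down_closed_prefix [pred i | P (rev_ord i)].
  by move=> i j ij; apply: Pup; rewrite /=; lia.
exists b => // i; have := Pb (rev_ord i); rewrite /= rev_ordK => ->.
by move: (ltn_ord i) => ?; apply/idP/idP; lia.
Qed.

Lemma sg_inW x : inW x ->
  exists a b, (a + b <= n)%N /\ map_mx Num.sg x = vecv R n a b.
Proof.
move=> xW.
have [|a an xpos] := @down_closed_prefix (fun i => 0 < x 0 i).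
  by move=> i j ij; have := xW i j ij; lra.
have [|b bn xneg] := @up_closed_suffix (fun i => x 0 i < 0).
  by move=> i j ij; have := xW i j ij; lra.
exists a, b; split.
  case: (leqP (a + b) n) => // abn; have ia : (a.-1 < n)%N by lia.
  have : 0 < x 0 (Ordinal ia) by rewrite xpos /=; lia.
  have : x 0 (Ordinal ia) < 0 by rewrite xneg /=; lia.
  lra.
apply/rowP => i; rewrite !mxE -xpos -xneg.
by case: sgrP.
Qed.

Lemma on_hyp_sg (i j : 'I_n) x : on_hyp i j x -> on_hyp i j (map_mx Num.sg x).
Proof.
rewrite /on_hyp !mxE; case: eqP => _ h; first by rewrite h sgr0.
by rewrite -(addr0_eq h) sgrN subrr.
Qed.

Lemma on_hyp_subZ (i j : 'I_n) t x z :
  on_hyp i j x -> on_hyp i j z -> on_hyp i j (x - t *: z).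
Proof.
rewrite /on_hyp !mxE; case: eqP => _ hx hz; first by rewrite hx hz mulr0 subrr.
by rewrite addrACA hx -opprD -mulrDr hz mulr0 subrr.
Qed.

Lemma subr_sg_mono (t r s : R) : (r != 0 -> t <= `|r|) -> (s != 0 -> t <= `|s|) ->
  s <= r -> s - t * Num.sg s <= r - t * Num.sg r.
Proof.
case: (sgrP r) => [->|r0|r0] tr; case: (sgrP s) => [->|s0|s0] ts sr;
  try have := tr (lt0r_neq0 r0); try have := tr (ltr0_neq0 r0);
  try have := ts (lt0r_neq0 s0); try have := ts (ltr0_neq0 s0); lra.
Qed.

Definition row_support x : {set 'I_n} := [set i | x 0 i != 0].

Lemma row_support_eq0 x : (row_support x == set0) = (x == 0).
Proof.
apply/eqP/eqP => [x0|->]; last by apply/setP => i; rewrite !in_set mxE eqxx.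
apply/rowP => i; rewrite mxE; apply/eqP/negbNE.
by rewrite -[_ != 0](in_set (fun i => x 0 i != 0)) -/(row_support x) x0 in_set0.
Qed.

Lemma flat_peel T x : flat_of T x -> x != 0 ->
  exists t, flat_of T (x - t *: map_mx Num.sg x) /\
    (#|row_support (x - t *: map_mx Num.sg x)| < #|row_support x|)%N.
Proof.
case=> xW xT x0.
have /set0Pn[i0] : row_support x != set0 by rewrite row_support_eq0.
rewrite in_set => xi0.
have [i1 xi1 tmin] :=
  @Order.TotalTheory.arg_minP _ _ _ i0 (fun i => x 0 i != 0) (fun i => `|x 0 i|) xi0.
set t := `|x 0 i1| in tmin *.
exists t; split.
  split=> [i j ij | p pT]; last exact: on_hyp_subZ (xT p pT) (on_hyp_sg (xT p pT)).
  by rewrite !mxE; apply: subr_sg_mono; [apply: tmin | apply: tmin | apply: xW].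
apply/proper_card/properP; split.
  apply/subsetP => i; rewrite !in_set !mxE; apply: contraNN => /eqP ->.
  by rewrite sgr0 mulr0 subrr.
by exists i1; rewrite !in_set ?xi1 // !mxE negbK /t mulrC -numEsg subrr.
Qed.

Lemma flat_in_span_vecv T (V : {vspace 'rV[R]_n}) :
  (forall a b, inEstar n (a, b) -> flat_of T (vecv R n a b) -> vecv R n a b \in V) ->
  forall x, flat_of T x -> x \in V.
Proof.
move=> Vvecv x; move: {2}#|row_support x| (leqnn #|row_support x|) => N.
elim: N x => [|N IH] x xN xT; have [->|x0] := eqVneq x 0; rewrite ?mem0v //.
  by move: x0; rewrite -row_support_eq0 -cards_eq0 -leqn0 xN.
have [t [yT ysupp]] := flat_peel xT x0.
have [a [b [abn sgx]]] := sg_inW xT.1.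
rewrite -[x](subrK (t *: map_mx Num.sg x)); apply: memvD.
  by apply: IH => //; rewrite -ltnS (leq_trans ysupp xN).
rewrite sgx memvZ // Vvecv //; last first.
  split=> [|p pT]; first exact: vecv_inW.
  by rewrite -sgx; apply/on_hyp_sg/xT.2.
rewrite /inEstar /inE /level abn /=; apply: contra x0 => /eqP[a0 b0].
rewrite -row_support_eq0; apply/eqP/setP => i; rewrite !in_set.
have := congr1 (fun y : 'rV[R]_n => y 0 i) sgx; rewrite a0 b0 vecv00 !mxE => /eqP.
by rewrite sgr_eq0 => ->.
Qed.
End SignVector.

Section Hyperplanes.
Variables (R : realType) (n : nat).
Local Notation v a b := (vecv R n a b).

Lemma on_hyp_vecv a b (i j : 'I_n) : (a + b <= n)%N -> (i <= j)%N ->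
  on_hyp i j (v a b) <-> compat (hyp_point (i, j)) (a, b).
Proof.
move=> abn ij; rewrite /on_hyp /compat /hyp_point !vecvE /=.
have := ltn_ord i; have := ltn_ord j.
case: (leqP a i) => ?; case: (leqP b (n.-1 - j)) => ?; case: eqP => [ji|/eqP ij'] ??;
  try subst j; by repeat case: ifPn => ?; try (exfalso; lia); split => // h; lra.
Qed.

Lemma flat_vecv_boxes (T : {set 'I_n * 'I_n}) a b :
  (forall p, p \in T -> (p.1 <= p.2)%N) -> (a + b <= n)%N ->
  flat_of T (v a b) <-> has (in_box (a, b)) (boxes n [seq hyp_point p | p <- enum T]).
Proof.
move=> Tle abn; rewrite has_boxes; last by rewrite /ple /=; apply/andP; lia.
split=> [[_ vT] | /allP vT].
  apply/allP => _ /mapP[[i j] + ->]; rewrite mem_enum => pT.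
  exact/(on_hyp_vecv abn (Tle _ pT))/vT.
split=> [|[i j] pT]; first exact: vecv_inW.
by apply/(on_hyp_vecv abn (Tle _ pT))/vT/map_f; rewrite mem_enum.
Qed.

Lemma span_vecv_stairs (rs : seq box) P :
  all (box_ok n) rs -> inEstar n P -> has (in_box P) rs ->
  v P.1 P.2 \in <<[seq v Z.1 Z.2 | Z <- stairs n rs]>>%VS.
Proof.
move=> /allP ok /andP[Pn _] /hasP[X Xrs PX].
have /andP[X12 _] := box_ok_end (ok X Xrs).
apply: (span_staircase X12 _ PX Pn) => l lX.
have [->|Z0] := eqVneq (stair X l) (0, 0)%N; first by rewrite vecv00 mem0v.
apply/memv_span/map_f; rewrite mem_stairs Z0; apply/hasP; exists X => //.
by apply/staircaseP; exists l.
Qed.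

Lemma span_dim_free (L : 'rV[R]_n -> Prop) k (X : seq 'rV[R]_n) :
  span_dim L k -> (forall x, L x -> x \in <<X>>%VS) -> {in X, forall x, L x} ->
  free X -> k = size X.
Proof.
move=> [U [LU Umin <-]] LX XL /eqP <-; suff -> : U = <<X>>%VS by [].
by apply/eqP; rewrite eqEsubv Umin //=; apply/span_subvP => x /XL /LU.
Qed.

End Hyperplanes.

Theorem lemma5p1 (R : realType) (n k : nat) (L : 'rV[R]_n -> Prop) :
  is_kflat k L ->
  is_k_ensemble n k (fun P => inEstar n P /\ L (vecv R n P.1 P.2)).
Proof.
case=> -[T [Tle LT]] Ldim.
set rs := boxes n [seq hyp_point p | p <- enum T].
have rs_ok : all (box_ok n) rs by apply/boxes_ok/hyp_point_lt.
have flatE P : inE n P -> flat_of T (vecv R n P.1 P.2) <-> has (in_box P) rs.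
  by case: P => a b; apply: flat_vecv_boxes.
have -> : k = size (stairs n rs).
  rewrite -(size_map (fun Z => vecv R n Z.1 Z.2)); apply: (span_dim_free Ldim).
  - move=> x /LT; apply: flat_in_span_vecv => a b abE.
    by case/andP: (abE) => abn _ /(flatE (a, b) abn); apply: span_vecv_stairs.
  - move=> _ /mapP[Z /(stairs_spec rs_ok)[/andP[Zn Z0] Zrs] ->].
    by apply/LT/flatE.
  - apply: free_vecv_sorted (stairs_sorted rs_ok (boxes_sorted _ _)).
    by apply/allP => Z /(stairs_spec rs_ok)[].
apply: k_ensemble_ext (is_k_ensemble_boxes (boxes_head _ _) rs_ok (boxes_sorted _ _)).
move=> P; split=> -[PE LP]; split=> //; case/andP: (PE) => Pn _.
  exact/(flatE P Pn)/LT.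
exact/LT/(flatE P Pn).
Qed.
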